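(* Let $G$ be the final graph of the uncoordinated construction (described in the context) on a set $P\subset\mathbb{R}^d$ of $n$ points with parameter $s>1$, let $\alpha$ be the aspect ratio of $P$, and let $\mathcal{W}=\{(P_i,Q_i)\}_{i=1}^m$ be the corresponding greedy WSPD, i.e. one pair $(B_r(p),B_r(q))$ with $r=|pq|/(2s+2)$ for each edge $pq$ of $G$. Then $\sum_{i=1}^m(|P_i|+|Q_i|)=O(n s^d\lg\alpha)$, where the implied constant depends only on $d$. Consequently the total number of messages in the distributed construction (described in the context) is $O(n s^d\lg\alpha)$.
   Context: Fix $d\ge 1$; $|xy|$ is Euclidean distance; $\lg$ is logarithm base 2; $B_r(p)=\{x\in P:|px|\le r\}$. The aspect ratio is $\alpha=\max_{u,v\in P}|uv|/\min_{u\ne v\in P}|uv|$. Uncoordinated construction: start with the graph $G$ on vertex set $P$ with no edges. Every ordered pair $(p,q)$ of distinct points of $P$ is processed exactly once, in an arbitrary order, one at a time. When $(p,q)$ is processed, the edge $pq$ is added to $G$ unless $G$ currently contains an edge whose endpoints can be labeled $p',q'$ with $|pp'|\le |p'q'|/(2s+2)$ and $|qq'|\le |p'q'|/(2s+2)$. $G$ is the graph after all pairs are processed. Distributed message model: whenever an edge $pq$ is built, one message is sent to each node of $B_r(p)$ and one to each node of $B_r(q)$, with $r=|pq|/(2s+2)$, informing it of the edge; so building $pq$ costs $|B_r(p)|+|B_r(q)|$ messages, and no other messages are counted. *)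

From HB Require Import structures.
From mathcomp Require Import all_boot all_order all_algebra.
From mathcomp Require Import all_classical all_reals all_analysis.
Set Implicit Arguments. Unset Strict Implicit. Unset Printing Implicit Defensive.
Import Order.TTheory GRing.Theory Num.Theory.
Local Open Scope ring_scope.

Section Defs.
Variables (R : realType) (d : nat).
Notation pt := 'rV[R]_d.

Definition dist (x y : pt) : R := Num.sqrt (\sum_(i < d) (x 0 i - y 0 i) ^+ 2).

Definition lg (x : R) : R := ln x / ln 2.

Definition maxdist (P : seq pt) : R :=
  \big[Num.max/0]_(u <- P) \big[Num.max/0]_(v <- P) dist u v.
Definition mindist (P : seq pt) : R :=
  \big[Num.min/maxdist P]_(u <- P) \big[Num.min/maxdist P]_(v <- P | u != v) dist u v.
(* aspect ratio alpha = max |uv| / min_{u<>v} |uv|  (meaningful for |P| >= 2) *)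
Definition aspect_ratio (P : seq pt) : R := maxdist P / mindist P.

Definition ball (P : seq pt) (r : R) (p : pt) : seq pt := [seq x <- P | dist p x <= r].

Definition rad (s : R) (p q : pt) : R := dist p q / (2 * s + 2).

Definition blocks (s : R) (e : pt * pt) (p q : pt) : bool :=
  let r := rad s e.1 e.2 in
  ((dist p e.1 <= r) && (dist q e.2 <= r)) || ((dist p e.2 <= r) && (dist q e.1 <= r)).

Definition process (s : R) (G : seq (pt * pt)) (pq : pt * pt) : seq (pt * pt) :=
  if has (fun e => blocks s e pq.1 pq.2) G then G else rcons G pq.

Definition uncoordinated_graph (s : R) (order : seq (pt * pt)) : seq (pt * pt) :=
  foldl (process s) [::] order.

Definition ordered_pairs (P : seq pt) : seq (pt * pt) :=
  [seq (p, q) | p <- P, q <- [seq q <- P | q != p]].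

Definition greedy_wspd (P : seq pt) (s : R) (G : seq (pt * pt)) : seq (seq pt * seq pt) :=
  [seq (ball P (rad s e.1 e.2) e.1, ball P (rad s e.1 e.2) e.2) | e <- G].

Definition wspd_size (W : seq (seq pt * seq pt)) : nat :=
  \sum_(w <- W) (size w.1 + size w.2).

(* Messages of the distributed model: building edge pq costs |B_r(p)| + |B_r(q)|. *)
Definition message_count (P : seq pt) (s : R) (G : seq (pt * pt)) : nat :=
  \sum_(e <- G) (size (ball P (rad s e.1 e.2) e.1) + size (ball P (rad s e.1 e.2) e.2)).

End Defs.

From Pilot Require Import Defs.
From HB Require Import structures.
From mathcomp Require Import all_boot all_order all_algebra.
From mathcomp Require Import all_classical all_reals all_analysis.
From mathcomp Require Import ring lra.
Set Implicit Arguments. Unset Strict Implicit. Unset Printing Implicit Defensive.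
Import Order.TTheory GRing.Theory Num.Theory.
Local Open Scope ring_scope.

(* Fix a point y and a dyadic length scale a, and look at the edges pq of G
   with a <= |pq| < 2a whose ball B_r(p) contains y.  Then p lies within
   O(a/s) of y and q within O(a) of y.  Snap p and q to a grid centred at y of
   mesh a/((2s+2)d), so that two points in the same cell are within
   a/(2s+2) <= r of each other: if two such edges e, f (e built first) had
   their endpoints in the same cells, e would have blocked f, so f would not be
   in G.  Hence there are O(s^d) such edges per scale, and at most 1 + lg alpha
   scales.  Summing over the n points y of P (double counting) bounds the
   total size of the balls, which is both the WSPD size and the number of
   messages. *)

Section Distance.
Variables (R : realType) (d : nat).
Implicit Types u v : 'rV[R]_d.

Lemma dist_ge0 u v : 0 <= dist u v.
Proof. exact: sqrtr_ge0. Qed.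

Lemma dist_sym u v : dist u v = dist v u.
Proof. by rewrite /dist; congr Num.sqrt; apply: eq_bigr => i _; rewrite -sqrrN opprB. Qed.

Lemma dist_gt0 u v : u != v -> 0 < dist u v.
Proof.
move=> uv; rewrite lt_neqAle dist_ge0 andbT eq_sym sqrtr_eq0 -ltNge.
have sq_ge0 i : 0 <= (u 0 i - v 0 i) ^+ 2 by exact: sqr_ge0.
rewrite lt_neqAle sumr_ge0 // andbT eq_sym; apply: contra uv => /eqP sum0.
apply/eqP/matrixP => i j; rewrite (ord1 i); apply/eqP.
by rewrite -subr_eq0 -sqrf_eq0; apply/eqP/(psumr_eq0P (fun k _ => sq_ge0 k) sum0).
Qed.

Lemma ler_coord_dist u v i : `|u 0 i - v 0 i| <= dist u v.
Proof.
rewrite /dist -sqrtr_sqr ler_sqrt; last by apply: sumr_ge0 => j _; exact: sqr_ge0.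
by rewrite (bigD1 i) //= lerDl; apply: sumr_ge0 => j _; exact: sqr_ge0.
Qed.

(* The crude bound d * w (instead of sqrt d * w) suffices. *)
Lemma dist_le_coord u v (w : R) :
  0 <= w -> (forall i, `|u 0 i - v 0 i| <= w) -> dist u v <= d%:R * w.
Proof.
move=> w0 close; rewrite /dist -(@ger0_norm _ (d%:R * w)) ?mulr_ge0 //.
rewrite -sqrtr_sqr ler_sqrt ?sqr_ge0 //.
apply: (@le_trans _ _ (\sum_(i < d) w ^+ 2)).
  by apply: ler_sum => i _; rewrite -real_normK ?num_real // lerXn2r ?nnegrE.
rewrite sumr_const card_ord exprMn -[w ^+ 2 *+ d]mulr_natl; apply: ler_wpM2r; first exact: sqr_ge0.
by case: d => [|n]; rewrite expr2 ?mul0r // ler_peMl // ler1n.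
Qed.

End Distance.

Section PointSet.
Variables (R : realType) (d : nat) (P : seq 'rV[R]_d).
Hypotheses (P_uniq : uniq P) (P_size : (2 <= size P)%N).

Lemma le_maxdist u v : u \in P -> v \in P -> dist u v <= maxdist P.
Proof.
move=> uP vP; apply: (bigmax_sup_seq _ _ _ _ _ uP) => //.
exact: (le_bigmax_seq _ _ _ _ vP).
Qed.

Lemma mindist_le u v : u \in P -> v \in P -> u != v -> mindist P <= dist u v.
Proof.
move=> uP vP uv; apply: le_trans (ge_bigmin_seq _ _ _ _ uP _) _ => //.
exact: (ge_bigmin_seq _ _ _ _ vP uv).
Qed.

Lemma exists_two_points : exists u v, [/\ u \in P, v \in P & u != v].
Proof.
move: P_uniq P_size; case: P => [|u [|v Q]] //= /andP[uQ _] _; exists u, v.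
split; rewrite ?inE ?eqxx ?orbT //.
by apply: contraNneq uQ => ->; rewrite inE eqxx.
Qed.

Lemma mindist_gt0 : 0 < mindist P.
Proof.
have [u [v [uP vP uv]]] := exists_two_points.
have maxdist_gt0 := lt_le_trans (dist_gt0 uv) (le_maxdist uP vP).
by apply: lt_bigmin => // x _; apply: lt_bigmin => // y; exact: dist_gt0.
Qed.

Lemma aspect_ratio_ge1 : 1 <= aspect_ratio P.
Proof.
have [u [v [uP vP uv]]] := exists_two_points.
rewrite /aspect_ratio ler_pdivlMr ?mindist_gt0 // mul1r.
exact: le_trans (mindist_le uP vP uv) (le_maxdist uP vP).
Qed.

End PointSet.

Section BinaryLog.
Variable R : realType.

Lemma ln2_gt0 : 0 < ln (2 : R).
Proof. by rewrite ln_gt0 // ltr1n. Qed.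

Lemma lg_ge0 (y : R) : 1 <= y -> 0 <= lg y.
Proof. by move=> y1; apply: divr_ge0; [exact: ln_ge0 | exact: ltW ln2_gt0]. Qed.

Lemma ler_lg (y z : R) : 0 < y -> y <= z -> lg y <= lg z.
Proof.
move=> y0 yz; rewrite /lg ler_pM2r ?invr_gt0 ?ln2_gt0 //.
by rewrite ler_ln // posrE (lt_le_trans y0).
Qed.

Lemma truncn_lg_itv (y : R) : 1 <= y ->
  2 ^+ Num.truncn (lg y) <= y < 2 ^+ (Num.truncn (lg y)).+1.
Proof.
move=> y1; have y0 : 0 < y := lt_le_trans ltr01 y1.
have pow2_pos n : (2 : R) ^+ n \in Num.pos by rewrite posrE exprn_gt0.
have ln_pow2 n : ln ((2 : R) ^+ n) = n%:R * ln 2 by rewrite lnXn // mulr_natl.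
have /andP[] := truncn_itv (lg_ge0 y1).
rewrite /lg ler_pdivlMr ?ln2_gt0 // ltr_pdivrMr ?ln2_gt0 // => lo hi.
apply/andP; split; first by rewrite -ler_ln ?pow2_pos ?posrE // ln_pow2.
by rewrite -ltr_ln ?pow2_pos ?posrE // ln_pow2.
Qed.

Lemma truncnS_le (x : R) : 0 <= x -> (Num.truncn x).+1%:R <= 1 + x.
Proof. by move=> x0; rewrite -natr1 addrC lerD2l; case/andP: (truncn_itv x0). Qed.

End BinaryLog.

Section Greedy.
Variables (R : realType) (d : nat) (s : R).
Notation edge := ('rV[R]_d * 'rV[R]_d)%type.

Definition nonblocking : rel edge := fun e f => ~~ blocks s e f.1 f.2.

Lemma rad_sym (p q : 'rV[R]_d) : Defs.rad s p q = Defs.rad s q p.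
Proof. by rewrite /Defs.rad dist_sym. Qed.

Lemma blocks_swap (e : edge) p q : blocks s (e.2, e.1) q p = blocks s e p q.
Proof. by rewrite /blocks /= rad_sym; congr (_ || _); rewrite andbC. Qed.

Lemma nonblocking_swap (e f : edge) : nonblocking (e.2, e.1) (f.2, f.1) = nonblocking e f.
Proof. by rewrite /nonblocking /= blocks_swap. Qed.

Lemma pairwise_nonblocking_foldl (G order : seq edge) :
  pairwise nonblocking G -> pairwise nonblocking (foldl (process s) G order).
Proof.
elim: order G => [|pq order IH] G //= G_nb; apply: IH; rewrite /process.
by case: ifPn => // /hasPn unblocked; rewrite pairwise_rcons G_nb andbT; apply/allP.
Qed.

Lemma mem_foldl_process (G order : seq edge) :
  {subset foldl (process s) G order <= G ++ order}.
Proof.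
elim: order G => [|pq order IH] G e /=; first by rewrite cats0.
move/IH; rewrite -cat_rcons !mem_cat => /orP[|->]; last by rewrite orbT.
by rewrite /process; case: ifP => _ eG; rewrite ?eG // mem_rcons inE eG orbT.
Qed.

Lemma pairwise_nonblocking_graph (order : seq edge) :
  pairwise nonblocking (uncoordinated_graph s order).
Proof. exact: pairwise_nonblocking_foldl. Qed.

Lemma mem_uncoordinated_graph (order : seq edge) :
  {subset uncoordinated_graph s order <= order}.
Proof. exact: mem_foldl_process. Qed.

End Greedy.

Section Buckets.
Variable R : realType.

(* For |t| <= N w, the index in [0, 2N] of the cell of mesh w containing t. *)
Definition bucket (N : nat) (w t : R) : 'I_(2 * N).+1 :=
  inord (Num.truncn (t / w + N%:R)).

Lemma bucket_close (N : nat) (w t1 t2 : R) : 0 < w ->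
  `|t1| <= N%:R * w -> `|t2| <= N%:R * w ->
  bucket N w t1 = bucket N w t2 -> `|t1 - t2| < w.
Proof.
move=> w0 t1N t2N /(congr1 val) /=.
have shifted_itv t : `|t| <= N%:R * w ->
    0 <= t / w + N%:R /\ (Num.truncn (t / w + N%:R) < (2 * N).+1)%N.
  rewrite -ler_pdivrMr // -(gtr0_norm w0) -normf_div (gtr0_norm w0) ler_norml.
  by rewrite ltnS truncn_le_nat -natr1 natrM => /andP[lo hi]; split; lra.
have [u1_ge0 u1_lt] := shifted_itv _ t1N; have [u2_ge0 u2_lt] := shifted_itv _ t2N.
rewrite !inordK // => same_trunc.
have /andP[lo1 hi1] := truncn_itv u1_ge0; have /andP[lo2 hi2] := truncn_itv u2_ge0.
rewrite same_trunc -natr1 in lo1 hi1; rewrite -natr1 in hi2.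
have -> : t1 - t2 = (t1 / w + N%:R - (t2 / w + N%:R)) * w by field; rewrite gt_eqF.
rewrite normrM (gtr0_norm w0) gtr_pMl // ltr_norml; apply/andP; split; lra.
Qed.

End Buckets.

Section Packing.
Variables (R : realType) (d : nat) (s a : R) (N : nat) (y : 'rV[R]_d).
Hypotheses (d_gt0 : (0 < d)%N) (s_ge0 : 0 <= s) (a_gt0 : 0 < a)
  (N_ge : d%:R * (4 * s + 6) <= N%:R).
Notation edge := ('rV[R]_d * 'rV[R]_d)%type.

Let c_gt0 : 0 < 2 * s + 2.
Proof. by have := s_ge0; lra. Qed.

Let w := a / (2 * s + 2) / d%:R.

Let w_gt0 : 0 < w.
Proof. by rewrite !divr_gt0 ?ltr0n. Qed.

Let mesh_eq : d%:R * w = a / (2 * s + 2).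
Proof. by rewrite /w mulrC divfK // pnatr_eq0 -lt0n. Qed.

Let mesh_le_rad (e : edge) : a <= dist e.1 e.2 -> d%:R * w <= Defs.rad s e.1 e.2.
Proof. by move=> a_le; rewrite mesh_eq ler_pM2r // invr_gt0. Qed.

Let tail_near (e : edge) i : dist e.1 e.2 < 2 * a ->
  dist e.1 y <= Defs.rad s e.1 e.2 -> `|e.1 0 i - y 0 i| <= (2 * d)%:R * w.
Proof.
move=> lt2a y_in; apply: le_trans (ler_coord_dist _ _ i) _; apply: le_trans y_in _.
by rewrite natrM -mulrA mesh_eq mulrA ler_pM2r ?invr_gt0 // ltW.
Qed.

Let head_near (e : edge) i : dist e.1 e.2 < 2 * a ->
  dist e.1 y <= Defs.rad s e.1 e.2 -> `|e.2 0 i - y 0 i| <= N%:R * w.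
Proof.
move=> lt2a y_in.
have -> : e.2 0 i - y 0 i = (e.2 0 i - e.1 0 i) + (e.1 0 i - y 0 i) by ring.
apply: le_trans (ler_normD _ _) _.
apply: le_trans (lerD (ler_coord_dist _ _ i) (le_trans (ler_coord_dist _ _ i) y_in)) _.
rewrite (dist_sym e.2).
apply: (@le_trans _ _ ((4 * s + 6) * (d%:R * w))); last first.
  by rewrite mulrA ler_wpM2r ?(ltW w_gt0) // mulrC.
rewrite mesh_eq /Defs.rad; set c := 2 * s + 2; set L := dist e.1 e.2.
have c1_gt0 : 0 < c + 1 by rewrite addr_gt0.
have -> : L + L / c = L * (c + 1) / c by field; rewrite gt_eqF.
have -> : (4 * s + 6) * (a / c) = 2 * a * (c + 1) / c by rewrite /c; field; rewrite -/c gt_eqF.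
by rewrite ler_pM2r ?invr_gt0 // ler_pM2r // ltW.
Qed.

Let code (e : edge) :=
  ([ffun i => bucket (2 * d) w (e.1 0 i - y 0 i)], [ffun i => bucket N w (e.2 0 i - y 0 i)]).

Let same_code_blocks (e f : edge) :
  a <= dist e.1 e.2 < 2 * a -> dist e.1 y <= Defs.rad s e.1 e.2 ->
  dist f.1 f.2 < 2 * a -> dist f.1 y <= Defs.rad s f.1 f.2 ->
  code e = code f -> blocks s e f.1 f.2.
Proof.
move=> /andP[e_ge e_lt] e_y f_lt f_y [/ffunP same_tail /ffunP same_head].
have close (p q : 'rV[R]_d) : (forall i, `|(p 0 i - y 0 i) - (q 0 i - y 0 i)| < w) ->
    dist p q <= Defs.rad s e.1 e.2.
  move=> lt_w; apply: le_trans (mesh_le_rad e_ge); apply: dist_le_coord => [|i].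
    exact: ltW.
  by have := ltW (lt_w i); rewrite opprB addrA subrK.
have tails_close : dist f.1 e.1 <= Defs.rad s e.1 e.2.
  apply: close => i; apply: (@bucket_close _ (2 * d)); rewrite ?tail_near //.
  by have := same_tail i; rewrite !ffunE.
have heads_close : dist f.2 e.2 <= Defs.rad s e.1 e.2.
  apply: close => i; apply: (@bucket_close _ N); rewrite ?head_near //.
  by have := same_head i; rewrite !ffunE.
by rewrite /blocks tails_close heads_close.
Qed.

Lemma packing (E : seq edge) : pairwise (nonblocking s) E ->
  (forall e, e \in E ->
     [/\ a <= dist e.1 e.2, dist e.1 e.2 < 2 * a & dist e.1 y <= Defs.rad s e.1 e.2]) ->
  (size E <= (2 * (2 * d)).+1 ^ d * (2 * N).+1 ^ d)%N.
Proof.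
move=> E_nb E_near.
have codes_uniq : uniq (map code E).
  rewrite uniq_pairwise pairwise_map.
  apply: (sub_in_pairwise (P := mem E)) E_nb; last exact/allP.
  move=> e f /E_near[e_ge e_lt e_y] /E_near[_ f_lt f_y]; apply: contra => /eqP.
  by apply: same_code_blocks; rewrite ?e_ge.
rewrite -(size_map code) -(card_uniqP codes_uniq); apply: leq_trans (max_card _) _.
by rewrite !card_prod !card_ffun !card_ord.
Qed.

End Packing.

Lemma sum_count_exchange (T U : Type) (A : seq T) (B : seq U) (r : T -> U -> bool) :
  (\sum_(x <- A) count (r x) B = \sum_(z <- B) count (r^~ z) A)%N.
Proof.
under eq_bigr do rewrite -sum1_count.
by rewrite (exchange_big_dep predT) //; apply: eq_bigr => z _; rewrite sum1_count.
Qed.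

Section Counting.
Variables (R : realType) (d : nat) (P : seq 'rV[R]_d) (s : R).
Hypotheses (d_gt0 : (0 < d)%N) (s_ge1 : 1 <= s)
  (P_uniq : uniq P) (P_size : (2 <= size P)%N).
Notation edge := ('rV[R]_d * 'rV[R]_d)%type.

Let s_ge0 : 0 <= s. Proof. exact: le_trans ler01 s_ge1. Qed.

Definition edge_on (e : edge) := [&& e.1 \in P, e.2 \in P & e.1 != e.2].

Definition edge_scale (e : edge) : nat := Num.truncn (lg (dist e.1 e.2 / mindist P)).

Let K := Num.truncn (lg (aspect_ratio P)).
Let N := (Num.truncn (d%:R * (4 * s + 6))).+1.
Let cells := ((2 * (2 * d)).+1 ^ d * (2 * N).+1 ^ d)%N.

Let m_gt0 : 0 < mindist P. Proof. exact: mindist_gt0. Qed.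

Lemma edge_scale_le e : edge_on e -> (edge_scale e <= K)%N.
Proof.
case/and3P=> e1P e2P e12; apply: le_truncn; apply: ler_lg.
  by rewrite divr_gt0 // dist_gt0.
by rewrite ler_pM2r ?invr_gt0 // le_maxdist.
Qed.

Lemma edge_scale_itv e : edge_on e ->
  mindist P * 2 ^+ edge_scale e <= dist e.1 e.2 < 2 * (mindist P * 2 ^+ edge_scale e).
Proof.
case/and3P=> e1P e2P e12.
have ratio_ge1 : 1 <= dist e.1 e.2 / mindist P by rewrite ler_pdivlMr // mul1r mindist_le.
have /andP[lo hi] := truncn_lg_itv ratio_ge1; rewrite -/(edge_scale e) in lo hi.
rewrite ler_pdivlMr // in lo; rewrite ltr_pdivrMr // exprS in hi.
by rewrite (mulrC (mindist P)) lo mulrA.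
Qed.

Lemma count_tail_ball (G : seq edge) (y : 'rV[R]_d) :
  pairwise (nonblocking s) G -> all edge_on G ->
  (count (fun e => (dist e.1 y <= Defs.rad s e.1 e.2)%R) G <= K.+1 * cells)%N.
Proof.
move=> G_nb G_on; rewrite -size_filter -sum1_size.
pose scale e : 'I_K.+1 := inord (edge_scale e).
rewrite (partition_big scale predT) //=.
apply: (@leq_trans (\sum_(j < K.+1) cells)); last by rewrite sum_nat_const card_ord.
apply: leq_sum => j _; rewrite sum1_count -size_filter.
apply: (packing (s := s) (a := mindist P * 2 ^+ j) (y := y)) => //.
- by rewrite mulr_gt0 // exprn_gt0.
- exact/ltW/truncnS_gt.
- exact/pairwise_filter/pairwise_filter.
move=> e; rewrite !mem_filter => /and3P[/eqP scale_j y_in eG].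
have e_on := allP G_on e eG.
have <- : edge_scale e = j.
  by rewrite -scale_j inordK // ltnS edge_scale_le.
by have /andP[lo hi] := edge_scale_itv e_on; split.
Qed.

Lemma sum_tail_balls (G : seq edge) : pairwise (nonblocking s) G -> all edge_on G ->
  (\sum_(e <- G) size (Defs.ball P (Defs.rad s e.1 e.2) e.1) <= size P * (K.+1 * cells))%N.
Proof.
move=> G_nb G_on; rewrite /Defs.ball; under eq_bigr do rewrite size_filter.
rewrite (sum_count_exchange G P (fun e y => dist e.1 y <= Defs.rad s e.1 e.2)).
apply: (@leq_trans (\sum_(y <- P) K.+1 * cells)).
  by apply: leq_sum => y _; exact: count_tail_ball.
by rewrite big_const_seq iter_addn_0 count_predT mulnC.
Qed.

(* The head balls B_r(q) are the tail balls of the reversed edges qp. *)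
Lemma message_count_le_nat (G : seq edge) : pairwise (nonblocking s) G -> all edge_on G ->
  (message_count P s G <= 2 * size P * (K.+1 * cells))%N.
Proof.
move=> G_nb G_on; rewrite /message_count big_split /= -mulnA mul2n -addnn.
rewrite leq_add ?sum_tail_balls //.
under eq_bigr do rewrite rad_sym.
have := @sum_tail_balls [seq (e.2, e.1) | e <- G]; rewrite big_map; apply.
  by rewrite pairwise_map; apply: sub_pairwise G_nb => e f; rewrite /= nonblocking_swap.
apply/allP=> _ /mapP[e eG ->]; have /and3P[e1P e2P e12] := allP G_on e eG.
by rewrite /edge_on /= e1P e2P eq_sym.
Qed.

Let cells_side_le : (2 * N).+1%:R <= (23 * d)%:R * s.
Proof.
have T_ge0 : 0 <= d%:R * (4 * s + 6) by rewrite mulr_ge0 // addr_ge0 ?mulr_ge0.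
have N_le := truncnS_le T_ge0; rewrite -/N in N_le.
have d_ge1 : 1 <= d%:R :> R by rewrite ler1n.
have ds_ge_d : d%:R <= d%:R * s by rewrite ler_peMr // (le_trans ler01).
have ds_ge1 : 1 <= d%:R * s := le_trans d_ge1 ds_ge_d.
rewrite -addn1 !natrM natrD; have := s_ge1; lra.
Qed.

Lemma message_count_le (G : seq edge) : pairwise (nonblocking s) G -> all edge_on G ->
  (message_count P s G)%:R <=
  (2 * (4 * d).+1 ^ d * (23 * d) ^ d)%:R * (size P)%:R * s ^+ d * (1 + lg (aspect_ratio P)).
Proof.
move=> G_nb G_on.
apply: (@le_trans _ _ (2 * size P * (K.+1 * cells))%:R).
  by rewrite ler_nat message_count_le_nat.
rewrite /cells.
have scales_le : K.+1%:R <= 1 + lg (aspect_ratio P).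
  exact/truncnS_le/lg_ge0/aspect_ratio_ge1.
have -> : (2 * (2 * d)).+1 = (4 * d).+1 by rewrite mulnA.
rewrite !natrM !natrX; set A := (4 * d).+1%:R; set L := 1 + lg _.
have -> : 2 * (size P)%:R * (K.+1%:R * (A ^+ d * (2 * N).+1%:R ^+ d)) =
    (2 * (size P)%:R * A ^+ d) * (K.+1%:R * (2 * N).+1%:R ^+ d) by ring.
have -> : 2 * A ^+ d * (23 * d)%:R ^+ d * (size P)%:R * s ^+ d * L =
    (2 * (size P)%:R * A ^+ d) * (L * ((23 * d)%:R * s) ^+ d) by rewrite exprMn; ring.
apply: ler_wpM2l; first by rewrite !mulr_ge0 ?exprn_ge0.
apply: ler_pM; rewrite ?exprn_ge0 //.
by apply: lerXn2r; rewrite ?nnegrE ?mulr_ge0.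
Qed.

End Counting.

Theorem theorem15 (d : nat) (hd : (0 < d)%N) :
  exists C : nat,
  forall (R : realType) (P : seq 'rV[R]_d) (s : R)
         (order : seq ('rV[R]_d * 'rV[R]_d)),
    uniq P -> (2 <= size P)%N -> 1 < s ->
    perm_eq order (ordered_pairs P) ->
    let G := uncoordinated_graph s order in
    let n := size P in
    let alpha := aspect_ratio P in
    ((wspd_size (greedy_wspd P s G))%:R
       <= C%:R * n%:R * s ^+ d * (1 + lg alpha)) /\
    ((message_count P s G)%:R
       <= C%:R * n%:R * s ^+ d * (1 + lg alpha)).
Proof.
exists (2 * (4 * d).+1 ^ d * (23 * d) ^ d)%N.
move=> R P s order P_uniq P_size s_gt1 order_perm G n alpha.
have G_nb : pairwise (nonblocking s) G := pairwise_nonblocking_graph s order.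
have G_on : all (edge_on P) G.
  apply/allP => e /mem_uncoordinated_graph; rewrite (perm_mem order_perm).
  case/allpairsPdep => p [q [pP]]; rewrite mem_filter => /andP[qp qP] ->.
  by rewrite /edge_on /= pP qP eq_sym.
have -> : wspd_size (greedy_wspd P s G) = message_count P s G.
  by rewrite /wspd_size big_map.
by split; apply: message_count_le => //; exact: ltW.
Qed.
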